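(* Let $Q$ be a finite quiver without oriented cycles, $k$ a field, and $I$ an admissible ideal of the path algebra $kQ$. Let $d\colon kQ\to kQ$ be a $k$-linear map such that $d(I)\subseteq I$ and such that for every path $u$ of $Q$ there is $t_u\in k$ with $d(u)=t_uu$. Let $\equiv_I$ be the smallest equivalence relation on the set of paths of $Q$ such that $u\equiv_I v$ whenever $u,v$ appear with nonzero coefficient in a same minimal relation of $I$. Then for all paths $u,v$, $u\equiv_I v$ implies $t_u=t_v$.
   Context: An ideal $I$ of $kQ$ is admissible if $(kQ^+)^N\subseteq I\subseteq(kQ^+)^2$ for some $N\ge 2$, where $kQ^+$ is the ideal generated by the arrows. A minimal relation of $I$ is a nonzero element $\sum_{i=1}^st_iu_i\in I$ with $t_i\in k^*$ and $u_i$ pairwise distinct paths such that no nonempty proper subsum $\sum_{i\in S}t_iu_i$ lies in $I$. *)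

From mathcomp Require Import all_boot all_algebra.
Set Implicit Arguments. Unset Strict Implicit. Unset Printing Implicit Defensive.
Import GRing.Theory.
Local Open Scope ring_scope.

Section PathAlgebra.
Variables (k : fieldType) (V A : finType) (src tgt : A -> V).

(* A path is a starting vertex x together with a sequence of composable
   arrows a1 a2 ... an (src a1 = x, tgt ai = src a(i+1)); the empty
   sequence is the trivial path e_x. *)
Definition path_ok (xp : V * seq A) : bool :=
  match xp.2 with
  | [::] => true
  | a :: p' => (src a == xp.1) && path (fun a b => tgt a == src b) a p'
  end.

Definition qpath := {xp : V * seq A | path_ok xp}.

Definition pstart (u : qpath) : V := (val u).1.
Definition parrows (u : qpath) : seq A := (val u).2.
Definition plen (u : qpath) : nat := size (parrows u).
Definition pend_raw (x : V) (p : seq A) : V := foldl (fun _ a => tgt a) x p.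
Definition pend (u : qpath) : V := pend_raw (pstart u) (parrows u).

Definition acyclic : Prop :=
  forall u : qpath, (0 < plen u)%N -> pend u != pstart u.

(* Elements of kQ: k-valued functions on paths (coefficient of each path).
   When Q has no oriented cycles there are finitely many paths, so this is
   exactly the path algebra kQ. *)
Definition kQ := qpath -> k.

Definition kQzero : kQ := fun _ => 0.
Definition kQadd (f g : kQ) : kQ := fun w => f w + g w.
Definition kQscale (c : k) (f : kQ) : kQ := fun w => c * f w.

(* multiplication: concatenation of paths (u then v); coefficient of w is
   the sum over all factorizations w = u v *)
Definition kQmul (f g : kQ) : kQ := fun w =>
  let x := pstart w in let p := parrows w in
  \sum_(i < (size p).+1)
    match (insub (x, take i p) : option qpath),
          (insub (pend_raw x (take i p), drop i p) : option qpath) with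
    | Some u, Some v => f u * g v
    | _, _ => 0
    end.

Definition pathel (u : qpath) : kQ := fun w => if w == u then 1 else 0.

Definition is_ideal (I : kQ -> Prop) : Prop :=
  [/\ I kQzero,
      (forall f g, I f -> I g -> I (kQadd f g)),
      (forall c f, I f -> I (kQscale c f)),
      (forall f g, I g -> I (kQmul f g)) &
      (forall f g, I f -> I (kQmul f g))].

Inductive gen_ideal (S : kQ -> Prop) : kQ -> Prop :=
| gi_base f : S f -> gen_ideal S f
| gi_zero : gen_ideal S kQzero
| gi_add f g : gen_ideal S f -> gen_ideal S g -> gen_ideal S (kQadd f g)
| gi_scale c f : gen_ideal S f -> gen_ideal S (kQscale c f)
| gi_mull f g : gen_ideal S g -> gen_ideal S (kQmul f g)
| gi_mulr f g : gen_ideal S f -> gen_ideal S (kQmul f g).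

Definition kQplus : kQ -> Prop :=
  gen_ideal (fun f => exists u : qpath, plen u = 1%N /\ f = pathel u).

Inductive ideal_prod (J1 J2 : kQ -> Prop) : kQ -> Prop :=
| ip_zero : ideal_prod J1 J2 kQzero
| ip_mul f g : J1 f -> J2 g -> ideal_prod J1 J2 (kQmul f g)
| ip_add f g : ideal_prod J1 J2 f -> ideal_prod J1 J2 g ->
               ideal_prod J1 J2 (kQadd f g).

Fixpoint ideal_pow (J : kQ -> Prop) (n : nat) : kQ -> Prop :=
  match n with
  | 0 => fun _ => True
  | 1 => J
  | n'.+1 => ideal_prod (ideal_pow J n') J
  end.

Definition admissible (I : kQ -> Prop) : Prop :=
  is_ideal I /\
  exists N : nat, (2 <= N)%N /\
    (forall f, ideal_pow kQplus N f -> I f) /\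
    (forall f, I f -> ideal_pow kQplus 2 f).

Definition subsum (S : pred qpath) (r : kQ) : kQ :=
  fun w => if S w then r w else 0.

Definition minimal_relation (I : kQ -> Prop) (r : kQ) : Prop :=
  [/\ I r,
      (exists u, r u != 0) &
      (forall S : pred qpath,
          (exists u, S u && (r u != 0)) ->
          (exists u, ~~ S u && (r u != 0)) ->
          ~ I (subsum S r))].

Definition same_min_rel (I : kQ -> Prop) (u v : qpath) : Prop :=
  exists r, minimal_relation I r /\ r u != 0 /\ r v != 0.

Inductive equivI (I : kQ -> Prop) : qpath -> qpath -> Prop :=
| eqI_base u v : same_min_rel I u v -> equivI I u v
| eqI_refl u : equivI I u u
| eqI_sym u v : equivI I u v -> equivI I v u
| eqI_trans u v w : equivI I u v -> equivI I v w -> equivI I u w.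

Definition klinear (d : kQ -> kQ) : Prop :=
  (forall f g, d (kQadd f g) = kQadd (d f) (d g)) /\
  (forall c f, d (kQscale c f) = kQscale c (d f)).

End PathAlgebra.

(* Since Q has no oriented cycles it has finitely many paths, so d acts on all
   of kQ as the diagonal map f |-> (w |-> t_w f(w)).  A d-stable subspace then
   contains every eigencomponent of each of its elements: apply the polynomial
   in d that vanishes on the other eigenvalues.  A minimal relation has no
   proper nonempty subsum in I, so it must be a single eigencomponent. *)

From mathcomp Require Import all_boot all_algebra ring.
From Stdlib Require Import FunctionalExtensionality.
Set Implicit Arguments. Unset Strict Implicit. Unset Printing Implicit Defensive.
Import GRing.Theory.

Section QuiverPaths.
Variables (V A : finType) (src tgt : A -> V).

Lemma path_ok_cons x a p :
  path_ok src tgt (x, a :: p) = (src a == x) && path_ok src tgt (tgt a, p).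
Proof.
rewrite /path_ok /=; case: p => [|b p] /=; first by rewrite andbT.
by rewrite (eq_sym (src b)).
Qed.

Lemma pend_raw_cat x p1 p2 :
  pend_raw tgt x (p1 ++ p2) = pend_raw tgt (pend_raw tgt x p1) p2.
Proof. exact: foldl_cat. Qed.

Lemma path_ok_cat x p1 p2 :
  path_ok src tgt (x, p1 ++ p2) =
  path_ok src tgt (x, p1) && path_ok src tgt (pend_raw tgt x p1, p2).
Proof.
elim: p1 x => [|a p1 IH] x; first by case: p2.
by rewrite cat_cons !path_ok_cons IH andbA.
Qed.

Lemma path_ok_slice x p i j : (i <= j)%N -> path_ok src tgt (x, p) ->
  path_ok src tgt (pend_raw tgt x (take i p), drop i (take j p)).
Proof.
move=> le_ij ok; have : path_ok src tgt (x, take j p).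
  by move: ok; rewrite -{1}(cat_take_drop j p) path_ok_cat => /andP[].
by rewrite -{1}(cat_take_drop i (take j p)) path_ok_cat (take_takel _ le_ij)
  => /andP[_].
Qed.

Lemma pend_raw_slice x p i j : (i <= j)%N ->
  pend_raw tgt (pend_raw tgt x (take i p)) (drop i (take j p))
  = pend_raw tgt x (take j p).
Proof. by move=> le_ij; rewrite -pend_raw_cat -(take_takel p le_ij) cat_take_drop. Qed.

Hypothesis acyc : acyclic src tgt.

(* The vertices reached after 0, 1, ..., plen u arrows are pairwise distinct:
   a repetition would cut out a nonempty oriented cycle. *)
Lemma plen_lt_card (u : qpath src tgt) : (plen u < #|V|)%N.
Proof.
case: u => [[x p] ok]; rewrite /plen /parrows /=.
pose visit (i : 'I_(size p).+1) := pend_raw tgt x (take i p).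
have visit_neq (i j : 'I_(size p).+1) : (i < j)%N -> visit i != visit j.
  move=> lt_ij; have le_ij := ltnW lt_ij.
  pose cyc : qpath src tgt := exist (path_ok src tgt) _ (path_ok_slice le_ij ok).
  have := acyc (u := cyc); rewrite /pend /pstart /plen /parrows /=.
  rewrite size_drop size_take_min (minn_idPl (ltn_ord j : (j <= size p)%N)).
  by rewrite subn_gt0 lt_ij pend_raw_slice // eq_sym => /(_ isT).
have visit_inj : injective visit.
  move=> i j; case: (ltngtP i j) => [/visit_neq/eqP//|/visit_neq/eqP + E|/val_inj//].
  by rewrite E.
by have := leq_card _ visit_inj; rewrite card_ord.
Qed.

Lemma acyclic_paths_finite : exists s : seq (qpath src tgt), forall u, u \in s.
Proof.
pose of_bseq (xb : V * #|V|.-bseq A) : option (qpath src tgt) :=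
  insub (xb.1, val xb.2).
exists (pmap of_bseq (enum {: V * #|V|.-bseq A})) => u.
rewrite mem_pmap; apply/mapP.
exists (pstart u, Bseq (ltnW (plen_lt_card u))); first by rewrite mem_enum.
by rewrite /of_bseq /= -valK; case: u => [[]].
Qed.

End QuiverPaths.

Local Open Scope ring_scope.

Section DiagonalMaps.
Variables (k : fieldType) (V A : finType) (src tgt : A -> V).
Variables (d : kQ k src tgt -> kQ k src tgt) (t : qpath src tgt -> k).
Hypothesis d_linear : klinear d.
Hypothesis d_path : forall u, d (pathel k u) = kQscale (t u) (pathel k u).

Lemma klinear0 : d (@kQzero k V A src tgt) = @kQzero k V A src tgt.
Proof.
have -> : @kQzero k V A src tgt = kQscale 0 (@kQzero k V A src tgt).
  by apply: functional_extensionality => w; rewrite /kQscale mul0r.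
by rewrite d_linear.2; apply: functional_extensionality => w; rewrite /kQscale !mul0r.
Qed.

Lemma diagonal_on_support (s : seq (qpath src tgt)) f :
  (forall w, f w != 0 -> w \in s) -> d f = (fun w => t w * f w).
Proof.
elim: s f => [|a s IH] f supp_f.
  have -> : f = @kQzero k V A src tgt.
    by apply: functional_extensionality => w; apply/eqP; apply: contraT => /supp_f.
  by rewrite klinear0; apply: functional_extensionality => w; rewrite /kQzero mulr0.
have split_f : f = kQadd (subsum (predC1 a) f) (kQscale (f a) (pathel k a)).
  apply: functional_extensionality => w; rewrite /kQadd /subsum /kQscale /pathel /=.
  by case: eqP => [->|_]; rewrite ?mulr1 ?mulr0 ?add0r ?addr0.
rewrite split_f d_linear.1 d_linear.2 d_path (IH (subsum (predC1 a) f)).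
  apply: functional_extensionality => w; rewrite /kQadd /subsum /kQscale /pathel /=.
  by case: eqP => [->|_]; rewrite ?mulr0 ?add0r ?addr0 ?mulr1 // mulrC.
move=> w; rewrite /subsum /=; case: (w =P a) => [->|w_neq_a]; first by rewrite eqxx.
by move=> /supp_f; rewrite inE => /orP[/eqP|].
Qed.

Hypothesis acyc : acyclic src tgt.

Lemma diagonalE f : d f = (fun w => t w * f w).
Proof.
have [s all_s] := acyclic_paths_finite acyc.
by apply: (diagonal_on_support (s := s)) => w _.
Qed.

Variable I : kQ k src tgt -> Prop.
Hypothesis I_add : forall f g, I f -> I g -> I (kQadd f g).
Hypothesis I_scale : forall c f, I f -> I (kQscale c f).
Hypothesis I_d : forall f, I f -> I (d f).

Lemma prod_weights_mem r (L : seq k) :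
  I r -> I (fun w => \prod_(l <- L) (t w - l) * r w).
Proof.
move=> I_r; elim: L => [|l L IH].
  suff -> : (fun w => \prod_(l <- [::]) (t w - l) * r w) = r by [].
  by apply: functional_extensionality => w; rewrite big_nil mul1r.
have -> : (fun w => \prod_(l' <- l :: L) (t w - l') * r w)
        = kQadd (d (fun w => \prod_(l <- L) (t w - l) * r w))
                (kQscale (- l) (fun w => \prod_(l <- L) (t w - l) * r w)).
  apply: functional_extensionality => w.
  by rewrite diagonalE /kQadd /kQscale big_cons; ring.
by apply: I_add; [apply: I_d | apply: I_scale].
Qed.

Lemma eigencomponent_mem r c : I r -> I (subsum (fun w => t w == c) r).
Proof.
move=> I_r; have [s all_s] := acyclic_paths_finite acyc.
pose L := [seq t w | w <- s & t w != c].
pose a := \prod_(l <- L) (c - l).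
have a_neq0 : a != 0.
  rewrite prodf_seq_neq0; apply/allP => _ /mapP[w + ->].
  by rewrite mem_filter subr_eq0 eq_sym => /andP[].
suff -> : subsum (fun w => t w == c) r
        = kQscale a^-1 (fun w => \prod_(l <- L) (t w - l) * r w).
  exact/I_scale/prod_weights_mem.
apply: functional_extensionality => w; rewrite /subsum /kQscale.
case: eqP => [->|/eqP tw_neq_c]; first by rewrite mulKf.
suff /eqP -> : \prod_(l <- L) (t w - l) == 0 by rewrite mul0r mulr0.
rewrite prodf_seq_eq0; apply/hasP; exists (t w); last by rewrite /= subrr.
by apply: map_f; rewrite mem_filter tw_neq_c all_s.
Qed.

Lemma minimal_relation_weight_eq r u v :
  minimal_relation I r -> r u != 0 -> r v != 0 -> t u = t v.
Proof.
move=> [I_r _ proper_notin] ru_neq0 rv_neq0; case: (eqVneq (t u) (t v)) => // tuv_neq; exfalso.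
apply: (proper_notin (fun w => t w == t u)).
- by exists u; rewrite eqxx ru_neq0.
- by exists v; rewrite eq_sym tuv_neq rv_neq0.
- exact: eigencomponent_mem.
Qed.

End DiagonalMaps.

Theorem lemma1p2 (k : fieldType) (V A : finType) (src tgt : A -> V)
  (Hacyc : acyclic src tgt)
  (I : kQ k src tgt -> Prop) (HI : admissible I)
  (d : kQ k src tgt -> kQ k src tgt) (Hlin : klinear d)
  (HdI : forall f, I f -> I (d f))
  (t : qpath src tgt -> k)
  (Ht : forall u : qpath src tgt, d (pathel k u) = kQscale (t u) (pathel k u))
  (u v : qpath src tgt) :
  equivI I u v -> t u = t v.
Proof.
have [[_ I_add I_scale _ _] _] := HI.
elim=> [x y [r [min_r [rx_neq0 ry_neq0]]]|//|x y _ ->//|x y z _ -> _ ->//].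
exact: (minimal_relation_weight_eq Hlin Ht Hacyc I_add I_scale HdI min_r).
Qed.
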